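(* Let $X$ be an infinite-dimensional complex Banach space, and let $(S(z))_{z\in\mathbb{C}}$ be an entire $C$-regularized group on $X$ with $C$ of dense range. Let $x\in X$ be a supercyclic vector for $\{S(z):z\in\mathbb{C}\}$. Then: (1) $S(z)x\neq0$ for all $z\in\mathbb{C}$; (2) for every $\omega_0\in\mathbb{C}$, the set $\{\alpha S(z)x:\alpha,z\in\mathbb{C},\ |z|>|\omega_0|\}$ is dense in $X$.
   Context: An entire $C$-regularized group is a family $(S(z))_{z\in\mathbb{C}}$ of bounded operators on $X$ satisfying three conditions: $S(0)=C$; $S(z+w)C=S(z)S(w)$ for all $z,w\in\mathbb{C}$; and $z\mapsto S(z)x$ is entire for every $x\in X$. A vector $x$ is supercyclic for $\{S(z):z\in\mathbb{C}\}$ if $\{\alpha S(z)x:\alpha,z\in\mathbb{C}\}$ is dense in $X$. *)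

From Stdlib Require Import Reals.
Open Scope R_scope.

Record CC := mkC { Re : R; Im : R }.

Definition C0 : CC := mkC 0 0.
Definition C1 : CC := mkC 1 0.
Definition Cadd (a b : CC) : CC := mkC (Re a + Re b) (Im a + Im b).
Definition Copp (a : CC) : CC := mkC (- Re a) (- Im a).
Definition Cmul (a b : CC) : CC :=
  mkC (Re a * Re b - Im a * Im b) (Re a * Im b + Im a * Re b).
Definition Cinv (a : CC) : CC :=
  mkC (Re a / (Re a ^ 2 + Im a ^ 2)) (- Im a / (Re a ^ 2 + Im a ^ 2)).
Definition Cmod (a : CC) : R := sqrt (Re a ^ 2 + Im a ^ 2).

Record CNormedSpace := {
  carrier :> Type;
  vzero : carrier;
  vadd : carrier -> carrier -> carrier;
  vopp : carrier -> carrier;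
  vscal : CC -> carrier -> carrier;
  vnorm : carrier -> R;
  vadd_assoc : forall x y z, vadd x (vadd y z) = vadd (vadd x y) z;
  vadd_comm : forall x y, vadd x y = vadd y x;
  vadd_0 : forall x, vadd x vzero = x;
  vadd_opp : forall x, vadd x (vopp x) = vzero;
  vscal_1 : forall x, vscal C1 x = x;
  vscal_mul : forall a b x, vscal a (vscal b x) = vscal (Cmul a b) x;
  vscal_addv : forall a x y, vscal a (vadd x y) = vadd (vscal a x) (vscal a y);
  vscal_adds : forall a b x, vscal (Cadd a b) x = vadd (vscal a x) (vscal b x);
  vnorm_eq0 : forall x, vnorm x = 0 -> x = vzero;
  vnorm_scal : forall a x, vnorm (vscal a x) = Cmod a * vnorm x;
  vnorm_triangle : forall x y, vnorm (vadd x y) <= vnorm x + vnorm y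
}.

Arguments vzero {c}.
Arguments vadd {c}.
Arguments vopp {c}.
Arguments vscal {c}.
Arguments vnorm {c}.

Definition vsub {X : CNormedSpace} (x y : X) : X := vadd x (vopp y).

Definition Cauchy_seq {X : CNormedSpace} (u : nat -> X) : Prop :=
  forall eps, eps > 0 -> exists N, forall m n, (N <= m)%nat -> (N <= n)%nat ->
    vnorm (vsub (u m) (u n)) < eps.

Definition seq_converges {X : CNormedSpace} (u : nat -> X) : Prop :=
  exists l : X, forall eps, eps > 0 -> exists N, forall n, (N <= n)%nat ->
    vnorm (vsub (u n) l) < eps.

Definition complete (X : CNormedSpace) : Prop :=
  forall u : nat -> X, Cauchy_seq u -> seq_converges u.

Fixpoint lincomb {X : CNormedSpace} (n : nat) (c : nat -> CC) (v : nat -> X) : X :=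
  match n with
  | O => vzero
  | S k => vadd (lincomb k c v) (vscal (c k) (v k))
  end.

Definition infinite_dimensional (X : CNormedSpace) : Prop :=
  forall (n : nat) (v : nat -> X), exists x : X,
    ~ exists c : nat -> CC, x = lincomb n c v.

Definition bounded_operator {X : CNormedSpace} (T : X -> X) : Prop :=
  (forall x y, T (vadd x y) = vadd (T x) (T y)) /\
  (forall a x, T (vscal a x) = vscal a (T x)) /\
  (exists M : R, forall x, vnorm (T x) <= M * vnorm x).

Definition dense {X : CNormedSpace} (A : X -> Prop) : Prop :=
  forall (y : X) (eps : R), eps > 0 -> exists a, A a /\ vnorm (vsub a y) < eps.

Definition entire {X : CNormedSpace} (f : CC -> X) : Prop :=
  forall z0 : CC, exists L : X, forall eps, eps > 0 -> exists delta, delta > 0 /\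
    forall h : CC, 0 < Cmod h < delta ->
      vnorm (vsub (vscal (Cinv h) (vsub (f (Cadd z0 h)) (f z0))) L) < eps.

Definition entire_C_regularized_group {X : CNormedSpace}
    (Cop : X -> X) (S : CC -> X -> X) : Prop :=
  bounded_operator Cop /\
  (forall z, bounded_operator (S z)) /\
  (forall x, S C0 x = Cop x) /\
  (forall z w x, S (Cadd z w) (Cop x) = S z (S w x)) /\
  (forall x, entire (fun z => S z x)).

Definition supercyclic {X : CNormedSpace} (S : CC -> X -> X) (x : X) : Prop :=
  dense (fun y => exists alpha z, y = vscal alpha (S z x)).

Definition dense_range {X : CNormedSpace} (T : X -> X) : Prop :=
  dense (fun y => exists x, y = T x).

(* (1) If S(z0) x = 0, then C S(u) x = S(u - z0) S(z0) x = 0 for every u, so the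
   bounded operator C vanishes on the dense set of multiples of the orbit; hence C = 0,
   which has dense range only on the zero space.
   (2) If a ball B(y, eps) contained no alpha S(z) x with |z| > r, Riesz's lemma would
   give infinitely many points of the ball at mutual distance eps/4, approximated by
   values alpha_k S(z_k) x with |z_k| <= r.  Along a subsequence z_k -> w, and
   S(w) x <> 0 by (1) keeps the alpha_k bounded, so a further subsequence converges,
   contradicting the separation. *)

From Pilot Require Import Defs.
From Stdlib Require Import Reals Lra Lia Classical ClassicalEpsilon.
Import Defs.
Open Scope R_scope.

Lemma CC_eq a b : Re a = Re b -> Im a = Im b -> a = b.
Proof. destruct a, b; simpl; intros; subst; reflexivity. Qed.

Lemma Cadd_C0l z : Cadd C0 z = z.
Proof. destruct z; apply CC_eq; simpl; ring. Qed.

Lemma Cadd_C0r z : Cadd z C0 = z.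
Proof. destruct z; apply CC_eq; simpl; ring. Qed.

Lemma Cadd_subK u z : Cadd (Cadd u (Copp z)) z = u.
Proof. destruct u, z; apply CC_eq; simpl; ring. Qed.

Lemma Cadd_addK z w : Cadd z (Cadd w (Copp z)) = w.
Proof. destruct z, w; apply CC_eq; simpl; ring. Qed.

Lemma Cmod_ge0 a : 0 <= Cmod a.
Proof. unfold Cmod; apply sqrt_pos. Qed.

Lemma Cmod_opp a : Cmod (Copp a) = Cmod a.
Proof. destruct a; unfold Cmod, Copp; simpl; f_equal; ring. Qed.

Lemma Cmod_real r : Cmod (mkC r 0) = Rabs r.
Proof. unfold Cmod; simpl. rewrite <- sqrt_Rsqr_abs. f_equal. unfold Rsqr; ring. Qed.

Lemma Cmod_C0 : Cmod C0 = 0.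
Proof. unfold C0. rewrite Cmod_real. apply Rabs_R0. Qed.

Lemma Cmod_C1 : Cmod C1 = 1.
Proof. unfold C1. rewrite Cmod_real. apply Rabs_R1. Qed.

Lemma Re_le_Cmod a : Rabs (Re a) <= Cmod a.
Proof. unfold Cmod. rewrite <- sqrt_Rsqr_abs. apply sqrt_le_1_alt. unfold Rsqr. nra. Qed.

Lemma Im_le_Cmod a : Rabs (Im a) <= Cmod a.
Proof. unfold Cmod. rewrite <- sqrt_Rsqr_abs. apply sqrt_le_1_alt. unfold Rsqr. nra. Qed.

Lemma Cmod_le_Re_Im a : Cmod a <= Rabs (Re a) + Rabs (Im a).
Proof.
  pose proof (Rabs_pos (Re a)); pose proof (Rabs_pos (Im a)).
  unfold Cmod. rewrite <- (sqrt_Rsqr (Rabs (Re a) + Rabs (Im a))) by lra.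
  apply sqrt_le_1_alt. unfold Rsqr.
  rewrite <- (pow2_abs (Re a)), <- (pow2_abs (Im a)). nra.
Qed.

Lemma Cmod_eq0 a : Cmod a = 0 -> a = C0.
Proof.
  unfold Cmod; intro H. apply sqrt_eq_0 in H; [|nra].
  apply CC_eq; simpl; nra.
Qed.

Lemma Cmod_gt0 a : a <> C0 -> 0 < Cmod a.
Proof.
  intro H. destruct (Cmod_ge0 a) as [h|h]; auto. exfalso; apply H, Cmod_eq0; auto.
Qed.

Lemma Cnorm2_neq0 a : a <> C0 -> Re a ^ 2 + Im a ^ 2 <> 0.
Proof. intros H E. apply H. apply CC_eq; simpl; nra. Qed.

Lemma Cmul_inv a : a <> C0 -> Cmul a (Cinv a) = C1.
Proof.
  intro H. pose proof (Cnorm2_neq0 a H) as N. destruct a; simpl in *.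
  apply CC_eq; unfold Cmul, Cinv; simpl; field; intro E; apply N; lra.
Qed.

Lemma Cmul_oppVr a b : a <> C0 -> Cmul a (Cmul (Copp (Cinv a)) b) = Copp b.
Proof.
  intro H. pose proof (Cnorm2_neq0 a H) as N. destruct a, b; simpl in *.
  apply CC_eq; unfold Cmul, Cinv, Copp; simpl; field; intro E; apply N; lra.
Qed.

Lemma Cmod_triangle a b : Cmod (Cadd a b) <= Cmod a + Cmod b.
Proof.
  destruct a as [a1 a2], b as [b1 b2].
  pose proof (Cmod_ge0 (mkC a1 a2)) as Hp; pose proof (Cmod_ge0 (mkC b1 b2)) as Hq.
  assert (Ep : Cmod (mkC a1 a2) ^ 2 = a1 ^ 2 + a2 ^ 2) by (unfold Cmod; cbn [Re Im]; rewrite <- Rsqr_pow2, Rsqr_sqrt; nra).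
  assert (Eq : Cmod (mkC b1 b2) ^ 2 = b1 ^ 2 + b2 ^ 2) by (unfold Cmod; cbn [Re Im]; rewrite <- Rsqr_pow2, Rsqr_sqrt; nra).
  set (p := Cmod (mkC a1 a2)) in *; set (q := Cmod (mkC b1 b2)) in *.
  assert (CS : a1 * b1 + a2 * b2 <= p * q).
  { assert (H : (a1 * b1 + a2 * b2) ^ 2 <= (p * q) ^ 2).
    { rewrite Rpow_mult_distr, Ep, Eq. pose proof (pow2_ge_0 (a1 * b2 - a2 * b1)). nra. }
    destruct (Rle_or_lt (a1 * b1 + a2 * b2) (p * q)) as [|Hlt]; [assumption|].
    assert (0 <= p * q) by nra. nra. }
  unfold Cmod at 1, Cadd; simpl. rewrite <- (sqrt_pow2 (p + q)) by lra.
  apply sqrt_le_1_alt. nra.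
Qed.

Section VectorSpace.
Context {X : CNormedSpace}.

Lemma vadd_0l (x : X) : vadd vzero x = x.
Proof. rewrite vadd_comm; apply vadd_0. Qed.

Lemma vadd_cancel_r (a b c : X) : vadd a c = vadd b c -> a = b.
Proof.
  intro H. rewrite <- (vadd_0 _ a), <- (vadd_0 _ b), <- (vadd_opp _ c), !vadd_assoc, H. reflexivity.
Qed.

Lemma vadd_cancel_l (a b c : X) : vadd c a = vadd c b -> a = b.
Proof. rewrite (vadd_comm _ c a), (vadd_comm _ c b). apply vadd_cancel_r. Qed.

Lemma vscal_0 (x : X) : vscal C0 x = vzero.
Proof.
  apply (vadd_cancel_l _ _ (vscal C0 x)). rewrite vadd_0, <- vscal_adds.
  f_equal. apply CC_eq; simpl; ring.
Qed.

Lemma vopp_scal (x : X) : vopp x = vscal (Copp C1) x.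
Proof.
  apply (vadd_cancel_l _ _ x). rewrite vadd_opp.
  rewrite <- (vscal_1 _ x) at 1. rewrite <- vscal_adds.
  rewrite <- (vscal_0 x). f_equal. apply CC_eq; simpl; ring.
Qed.

Lemma vscal_v0 a : vscal a (@vzero X) = vzero.
Proof.
  transitivity (vscal a (vscal C0 (@vzero X))); [rewrite vscal_0; reflexivity|].
  rewrite vscal_mul. replace (Cmul a C0) with C0 by (apply CC_eq; simpl; ring). apply vscal_0.
Qed.

Lemma vnorm_0 : vnorm (@vzero X) = 0.
Proof. rewrite <- (vscal_0 vzero), vnorm_scal, Cmod_C0. ring. Qed.

Lemma vnorm_opp (x : X) : vnorm (vopp x) = vnorm x.
Proof. rewrite vopp_scal, vnorm_scal, Cmod_opp, Cmod_C1. ring. Qed.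

Lemma vnorm_ge0 (x : X) : 0 <= vnorm x.
Proof.
  pose proof (vnorm_triangle _ x (vopp x)). rewrite vadd_opp, vnorm_0, vnorm_opp in H. lra.
Qed.

Lemma vopp_add (a b : X) : vopp (vadd a b) = vadd (vopp a) (vopp b).
Proof. rewrite !vopp_scal. apply vscal_addv. Qed.

Lemma vopp_opp (a : X) : vopp (vopp a) = a.
Proof.
  rewrite !vopp_scal, vscal_mul. rewrite <- (vscal_1 _ a) at 2. f_equal.
  apply CC_eq; simpl; ring.
Qed.

Lemma vscal_opp (a : CC) (x : X) : vscal a (vopp x) = vopp (vscal a x).
Proof.
  rewrite !vopp_scal, !vscal_mul. f_equal. apply CC_eq; simpl; ring.
Qed.

Lemma vscal_oppC (a : CC) (x : X) : vscal (Copp a) x = vopp (vscal a x).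
Proof.
  rewrite !vopp_scal, !vscal_mul. f_equal. apply CC_eq; simpl; ring.
Qed.

Lemma vadd_swap (a b c : X) : vadd a (vadd b c) = vadd b (vadd a c).
Proof. rewrite !vadd_assoc, (vadd_comm _ a b). reflexivity. Qed.

Lemma vsub_split (a b c : X) : vsub a c = vadd (vsub a b) (vsub b c).
Proof.
  unfold vsub. rewrite <- vadd_assoc. f_equal. rewrite vadd_assoc, (vadd_comm _ (vopp b) b), vadd_opp, vadd_0l.
  reflexivity.
Qed.

Lemma vsub_sym (a b : X) : vsub b a = vopp (vsub a b).
Proof. unfold vsub. rewrite vopp_add, vopp_opp, vadd_comm. reflexivity. Qed.

Lemma vnorm_sub_sym (a b : X) : vnorm (vsub a b) = vnorm (vsub b a).
Proof. rewrite (vsub_sym b a), vnorm_opp. reflexivity. Qed.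

Lemma vnorm_sub_triangle (a b c : X) : vnorm (vsub a c) <= vnorm (vsub a b) + vnorm (vsub b c).
Proof. rewrite (vsub_split a b c). apply vnorm_triangle. Qed.

Lemma vsub_0 (a : X) : vsub a vzero = a.
Proof. unfold vsub. rewrite <- (vscal_0 vzero), <- vscal_oppC, vscal_v0, vadd_0. reflexivity. Qed.

Lemma vsub_diag (a : X) : vsub a a = vzero.
Proof. apply vadd_opp. Qed.

Lemma vadd_sub (a b : X) : vadd b (vsub a b) = a.
Proof. unfold vsub. rewrite vadd_swap, vadd_opp, vadd_0. reflexivity. Qed.

Lemma vsub_add_l (y a b : X) : vsub (vadd y a) (vadd y b) = vsub a b.
Proof.
  unfold vsub. rewrite vopp_add, <- vadd_assoc, vadd_swap, (vadd_assoc _ y), vadd_opp, vadd_0l. reflexivity.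
Qed.

Lemma vsub_add_self (y a : X) : vsub (vadd y a) y = a.
Proof.
  unfold vsub. rewrite (vadd_comm _ y a), <- vadd_assoc, vadd_opp, vadd_0. reflexivity.
Qed.

Lemma vscal_sub (a : CC) (x y : X) : vscal a (vsub x y) = vsub (vscal a x) (vscal a y).
Proof. unfold vsub. rewrite vscal_addv, vscal_opp. reflexivity. Qed.

Lemma vscal_subs (a b : CC) (x : X) : vscal (Cadd a (Copp b)) x = vsub (vscal a x) (vscal b x).
Proof. unfold vsub. rewrite vscal_adds, vscal_oppC. reflexivity. Qed.

Lemma vsub_sub (x y z : X) : vsub (vsub x y) z = vsub x (vadd y z).
Proof. unfold vsub. rewrite vopp_add, vadd_assoc. reflexivity. Qed.

Lemma vnorm_le_sub (a b : X) : vnorm a <= vnorm b + vnorm (vsub a b).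
Proof. rewrite <- (vadd_sub a b) at 1. apply vnorm_triangle. Qed.

Lemma vadd_ACA (a b c d : X) : vadd (vadd a b) (vadd c d) = vadd (vadd a c) (vadd b d).
Proof. rewrite <- !vadd_assoc. f_equal. apply vadd_swap. Qed.

Lemma vnorm_gt0 (x : X) : x <> vzero -> 0 < vnorm x.
Proof. intro H. destruct (vnorm_ge0 x) as [h|h]; auto. exfalso; apply H, vnorm_eq0; auto. Qed.

Lemma vnorm_small_eq0 (y : X) : (forall eta, eta > 0 -> vnorm y < eta) -> y = vzero.
Proof.
  intro H. apply vnorm_eq0. destruct (vnorm_ge0 y) as [h|h]; auto.
  specialize (H _ h). lra.
Qed.

Lemma vnorm_sub0l (b : X) : vnorm (vsub vzero b) = vnorm b.
Proof. rewrite vsub_sym, vnorm_opp, vsub_0. reflexivity. Qed.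

End VectorSpace.

Section Operators.
Context {X : CNormedSpace}.

Lemma bounded_operator0 (T : X -> X) : bounded_operator T -> T vzero = vzero.
Proof.
  intros [_ [HS _]]. rewrite <- (vscal_0 vzero), HS, !vscal_0. reflexivity.
Qed.

Lemma bounded_operator_sub (T : X -> X) a b :
  bounded_operator T -> T (vsub a b) = vsub (T a) (T b).
Proof. intros [HA [HS _]]. unfold vsub. rewrite HA, !vopp_scal, HS. reflexivity. Qed.

Lemma bounded_operator_lipschitz (T : X -> X) : bounded_operator T ->
  exists K, K > 0 /\ forall a b, vnorm (vsub (T a) (T b)) <= K * vnorm (vsub a b).
Proof.
  intro HT. pose proof HT as [_ [_ [M HM]]]. exists (Rabs M + 1). split.
  { pose proof (Rabs_pos M); lra. }
  intros a b. rewrite <- bounded_operator_sub by auto. eapply Rle_trans; [apply HM|].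
  apply Rmult_le_compat_r; [apply vnorm_ge0|]. pose proof (Rle_abs M); lra.
Qed.

Lemma bounded_operator_dense_kernel (T : X -> X) (A : X -> Prop) :
  bounded_operator T -> dense A -> (forall a, A a -> T a = vzero) ->
  forall y, T y = vzero.
Proof.
  intros HT HA HTA y. apply vnorm_small_eq0. intros eta Heta.
  destruct (bounded_operator_lipschitz T HT) as [K [HK HKl]].
  destruct (HA y (eta / K)) as [a [Ha Hay]]; [apply Rdiv_lt_0_compat; lra|].
  specialize (HKl a y). rewrite HTA, vnorm_sub0l in HKl by exact Ha.
  apply Rle_lt_trans with (1 := HKl).
  apply Rlt_le_trans with (K * (eta / K)); [apply Rmult_lt_compat_l; auto|].
  right; field; lra.
Qed.

Lemma dense_range_zero_trivial (T : X -> X) :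
  dense_range T -> (forall y, T y = vzero) -> forall y : X, y = vzero.
Proof.
  intros HT H0 y. apply vnorm_small_eq0. intros eta Heta.
  destruct (HT y eta Heta) as [a [[w ->] Hw]]. rewrite H0, vnorm_sub0l in Hw. exact Hw.
Qed.

End Operators.

Lemma infinite_dimensional_nontrivial (X : CNormedSpace) :
  infinite_dimensional X -> exists y : X, y <> vzero.
Proof.
  intro Hinf. destruct (Hinf O (fun _ => vzero)) as [y Hy].
  exists y. intro E. apply Hy. exists (fun _ => C0). exact E.
Qed.

Section OrbitNonvanishing.
Context {X : CNormedSpace} (Cop : X -> X) (S : CC -> X -> X).
Hypothesis HS0 : forall x, S C0 x = Cop x.
Hypothesis HSadd : forall z w x, S (Cadd z w) (Cop x) = S z (S w x).
Hypothesis HSb : forall z, bounded_operator (S z).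

Lemma regularizer_kills_orbit x z0 : S z0 x = vzero -> forall u, Cop (S u x) = vzero.
Proof.
  intros Hz0 u. rewrite <- HS0, <- HSadd, Cadd_C0l.
  rewrite <- (Cadd_subK u z0) at 1. rewrite HSadd, Hz0. apply bounded_operator0, HSb.
Qed.

Lemma supercyclic_orbit_nonvanishing x :
  bounded_operator Cop -> dense_range Cop -> (exists y : X, y <> vzero) ->
  supercyclic S x -> forall z, S z x <> vzero.
Proof.
  intros HCb HCd [y Hy] Hsc z Hz. apply Hy.
  apply (dense_range_zero_trivial Cop HCd).
  apply (bounded_operator_dense_kernel Cop _ HCb Hsc).
  intros a [al [u ->]]. destruct HCb as [_ [HCs _]].
  rewrite HCs, (regularizer_kills_orbit x z Hz u). apply vscal_v0.
Qed.

End OrbitNonvanishing.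

Definition subseq_index (phi : nat -> nat) : Prop := forall k, (phi k < phi (S k))%nat.

Definition Ccvg_to (a : nat -> CC) (l : CC) : Prop :=
  forall eps, eps > 0 -> exists N, forall n, (N <= n)%nat -> Cmod (Cadd (a n) (Copp l)) < eps.

Definition cvg_to {X : CNormedSpace} (u : nat -> X) (l : X) : Prop :=
  forall eps, eps > 0 -> exists N, forall n, (N <= n)%nat -> vnorm (vsub (u n) l) < eps.

Lemma subseq_index_lt phi : subseq_index phi -> forall i j, (i < j)%nat -> (phi i < phi j)%nat.
Proof. intros H i j Hij. induction Hij; [apply H|]. specialize (H m). lia. Qed.

Lemma subseq_index_ge phi : subseq_index phi -> forall k, (k <= phi k)%nat.
Proof. intros H k. induction k; [lia|]. specialize (H k). lia. Qed.

Lemma subseq_index_comp f g : subseq_index f -> subseq_index g -> subseq_index (fun k => f (g k)).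
Proof. intros Hf Hg k. apply subseq_index_lt; auto. Qed.

Lemma subseq_index_shift N psi : subseq_index psi -> subseq_index (fun k => (N + psi k)%nat).
Proof. intros H k. specialize (H k). lia. Qed.

Lemma cvg_subseq {X : CNormedSpace} (u : nat -> X) l phi :
  subseq_index phi -> cvg_to u l -> cvg_to (fun k => u (phi k)) l.
Proof.
  intros Hphi Hu eps He. destruct (Hu eps He) as [N HN]. exists N. intros k Hk.
  apply HN. pose proof (subseq_index_ge phi Hphi k). lia.
Qed.

Lemma inv_INR_S_small eps : eps > 0 -> exists N, forall k, (N <= k)%nat -> / (INR k + 1) < eps.
Proof.
  intro He. destruct (archimed_cor1 eps He) as [N [HN HN0]]. exists N. intros k Hk.
  apply Rle_lt_trans with (/ INR N); auto.
  apply Rinv_le_contravar; [apply lt_0_INR; lia|]. apply le_INR in Hk. lra.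
Qed.

Lemma inv_INR_S_pos k : 0 < / (INR k + 1).
Proof. apply Rinv_0_lt_compat. pose proof (pos_INR k). lra. Qed.

(* [g N k] is an index [>= N] at which the sequence is [1/(k+1)]-close to the limit point. *)
Fixpoint diagonal_index (g : nat -> nat -> nat) (k : nat) : nat :=
  match k with O => g O O | S k' => g (S (diagonal_index g k')) (S k') end.

Lemma Rseq_bounded_cvg_subseq (u : nat -> R) M : (forall n, Rabs (u n) <= M) ->
  exists phi l, subseq_index phi /\ Un_cv (fun k => u (phi k)) l.
Proof.
  intro HM.
  destruct (Bolzano_Weierstrass u (fun c => -M <= c <= M) (compact_P3 (-M) M)) as [l Hl].
  { intro n. specialize (HM n). pose proof (Rle_abs (u n)); pose proof (Rle_abs (- u n)).
    rewrite Rabs_Ropp in *. split; lra. }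
  assert (H : forall N k, exists p, (N <= p)%nat /\ Rabs (u p - l) < / (INR k + 1)).
  { intros N k. set (e := mkposreal _ (inv_INR_S_pos k)).
    destruct (Hl (disc l e) N) as [p [Hp1 Hp2]]; [exists e; intros y Hy; exact Hy|].
    exists p; split; auto. }
  destruct (choice _ (fun N => choice _ (H N))) as [g Hg].
  exists (diagonal_index g), l. split.
  { intro k. simpl. destruct (Hg (S (diagonal_index g k)) (S k)). lia. }
  intros eps He. destruct (inv_INR_S_small eps He) as [N HN]. exists N. intros k Hk.
  apply Rlt_trans with (/ (INR k + 1)); [|auto].
  destruct k; simpl; apply Hg.
Qed.

Lemma Cseq_bounded_cvg_subseq (a : nat -> CC) M : (forall n, Cmod (a n) <= M) ->
  exists phi l, subseq_index phi /\ Ccvg_to (fun k => a (phi k)) l.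
Proof.
  intro HM.
  destruct (Rseq_bounded_cvg_subseq (fun n => Re (a n)) M) as [p1 [l1 [Hp1 Hl1]]].
  { intro n. eapply Rle_trans; [apply Re_le_Cmod|apply HM]. }
  destruct (Rseq_bounded_cvg_subseq (fun n => Im (a (p1 n))) M) as [p2 [l2 [Hp2 Hl2]]].
  { intro n. eapply Rle_trans; [apply Im_le_Cmod|apply HM]. }
  exists (fun k => p1 (p2 k)), (mkC l1 l2). split; [apply subseq_index_comp; auto|].
  intros eps He.
  destruct (Hl1 (eps/2)) as [N1 HN1]; [lra|].
  destruct (Hl2 (eps/2)) as [N2 HN2]; [lra|].
  exists (max N1 N2). intros k Hk.
  eapply Rle_lt_trans; [apply Cmod_le_Re_Im|]. simpl.
  assert (N1 <= p2 k)%nat by (pose proof (subseq_index_ge p2 Hp2 k); lia).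
  specialize (HN1 (p2 k) ltac:(lia)). specialize (HN2 k ltac:(lia)).
  unfold R_dist, Rminus in *. lra.
Qed.

Definition vcontinuous {X : CNormedSpace} (f : CC -> X) : Prop :=
  forall z0 eta, eta > 0 -> exists rho, rho > 0 /\
    forall h, Cmod h < rho -> vnorm (vsub (f (Cadd z0 h)) (f z0)) < eta.

Section Continuity.
Context {X : CNormedSpace}.

(* Near [z0] the difference quotient stays within [1] of the derivative [L],
   so [|f (z0 + h) - f z0| <= |h| (|L| + 1)]. *)
Lemma entire_continuous (f : CC -> X) : entire f -> vcontinuous f.
Proof.
  intros Hf z0 eta Heta. destruct (Hf z0) as [L HL].
  destruct (HL 1) as [del [Hdel Hd]]; [lra|].
  pose proof (vnorm_ge0 L) as HL0.
  exists (Rmin del (eta / (vnorm L + 1))). split.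
  { apply Rmin_pos; auto. apply Rdiv_lt_0_compat; lra. }
  intros h Hh.
  assert (Hm1 : Cmod h < del) by (eapply Rlt_le_trans; [apply Hh|apply Rmin_l]).
  assert (Hm2 : Cmod h < eta / (vnorm L + 1)) by (eapply Rlt_le_trans; [apply Hh|apply Rmin_r]).
  destruct (classic (h = C0)) as [->|Hnz].
  { rewrite Cadd_C0r, vsub_diag, vnorm_0. exact Heta. }
  specialize (Hd h (conj (Cmod_gt0 h Hnz) Hm1)).
  set (D := vsub (f (Cadd z0 h)) (f z0)) in *.
  assert (ED : D = vscal h (vscal (Cinv h) D))
    by (rewrite vscal_mul, Cmul_inv, vscal_1 by exact Hnz; reflexivity).
  pose proof (vnorm_le_sub (vscal (Cinv h) D) L) as T.
  rewrite ED, vnorm_scal.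
  apply Rle_lt_trans with (Cmod h * (vnorm L + 1)).
  { apply Rmult_le_compat_l; [apply Cmod_ge0|lra]. }
  apply (Rmult_lt_compat_r (vnorm L + 1)) in Hm2; [|lra].
  unfold Rdiv in Hm2. rewrite Rmult_assoc, Rinv_l, Rmult_1_r in Hm2 by lra. exact Hm2.
Qed.

Lemma vcontinuous_cvg (f : CC -> X) a z :
  vcontinuous f -> Ccvg_to a z -> cvg_to (fun k => f (a k)) (f z).
Proof.
  intros Hf Ha eta Heta. destruct (Hf z eta Heta) as [rho [Hrho Hc]].
  destruct (Ha rho Hrho) as [N HN]. exists N. intros k Hk.
  specialize (Hc _ (HN k Hk)). rewrite Cadd_addK in Hc. exact Hc.
Qed.

Lemma cvg_scal (a : nat -> CC) (u : nat -> X) al w :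
  Ccvg_to a al -> cvg_to u w -> cvg_to (fun k => vscal (a k) (u k)) (vscal al w).
Proof.
  intros Ha Hu eps He.
  set (A := Cmod al + 1). set (W := vnorm w + 1).
  assert (HA : 0 < A) by (pose proof (Cmod_ge0 al); unfold A; lra).
  assert (HW : 0 < W) by (pose proof (vnorm_ge0 w); unfold W; lra).
  destruct (Ha (Rmin 1 (eps / (2 * W)))) as [N1 HN1].
  { apply Rmin_pos; [lra|]. apply Rdiv_lt_0_compat; lra. }
  destruct (Hu (eps / (2 * A))) as [N2 HN2]; [apply Rdiv_lt_0_compat; lra|].
  exists (max N1 N2). intros n Hn.
  specialize (HN1 n ltac:(lia)). specialize (HN2 n ltac:(lia)).
  pose proof (Rmin_l 1 (eps / (2 * W))) as H1. pose proof (Rmin_r 1 (eps / (2 * W))) as H2.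
  assert (Han : Cmod (a n) <= A).
  { pose proof (Cmod_triangle (Cadd (a n) (Copp al)) al) as T.
    rewrite Cadd_subK in T. unfold A. lra. }
  rewrite (vsub_split _ (vscal (a n) w)), <- vscal_sub, <- vscal_subs.
  eapply Rle_lt_trans; [apply vnorm_triangle|]. rewrite !vnorm_scal.
  assert (T1 : Cmod (a n) * vnorm (vsub (u n) w) < A * (eps / (2 * A))).
  { apply Rle_lt_trans with (A * vnorm (vsub (u n) w)).
    - apply Rmult_le_compat_r; [apply vnorm_ge0|exact Han].
    - apply Rmult_lt_compat_l; assumption. }
  assert (T2 : Cmod (Cadd (a n) (Copp al)) * vnorm w <= eps / (2 * W) * W).
  { apply Rmult_le_compat; [apply Cmod_ge0|apply vnorm_ge0|lra|unfold W; lra]. }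
  replace (A * (eps / (2 * A))) with (eps / 2) in T1 by (field; lra).
  replace (eps / (2 * W) * W) with (eps / 2) in T2 by (field; lra).
  lra.
Qed.

End Continuity.

Section FiniteSpan.
Context {X : CNormedSpace}.
Implicit Types (v : nat -> X) (c : nat -> CC).

Lemma lincomb_ext n (c d : nat -> CC) (v : nat -> X) :
  (forall i, (i < n)%nat -> c i = d i) -> lincomb n c v = lincomb n d v.
Proof.
  induction n; intro H; simpl; [reflexivity|].
  rewrite IHn by (intros; apply H; lia). rewrite H by lia. reflexivity.
Qed.

Lemma lincomb_add n (c d : nat -> CC) (v : nat -> X) :
  lincomb n (fun i => Cadd (c i) (d i)) v = vadd (lincomb n c v) (lincomb n d v).
Proof.
  induction n; simpl. { rewrite vadd_0; reflexivity. }
  rewrite IHn, vscal_adds. apply vadd_ACA.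
Qed.

Lemma lincomb_scal a n (c : nat -> CC) (v : nat -> X) :
  vscal a (lincomb n c v) = lincomb n (fun i => Cmul a (c i)) v.
Proof.
  induction n; simpl. { apply vscal_v0. }
  rewrite vscal_addv, IHn, vscal_mul. reflexivity.
Qed.

Lemma lincomb_opp n (c : nat -> CC) (v : nat -> X) :
  vopp (lincomb n c v) = lincomb n (fun i => Copp (c i)) v.
Proof.
  rewrite vopp_scal, lincomb_scal. apply lincomb_ext. intros.
  apply CC_eq; simpl; ring.
Qed.

Lemma lincomb_zero n (c : nat -> CC) (v : nat -> X) :
  (forall i, (i < n)%nat -> c i = C0) -> lincomb n c v = vzero.
Proof.
  induction n; intro H; simpl; [reflexivity|].
  rewrite IHn by (intros; apply H; lia). rewrite H by lia. rewrite vscal_0. apply vadd_0.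
Qed.

Lemma lincomb_delta j n (v : nat -> X) : (j < n)%nat ->
  lincomb n (fun i => if Nat.eqb i j then C1 else C0) v = v j.
Proof.
  induction n; intro H; [lia|]. simpl.
  destruct (Nat.eq_dec j n) as [->|Hne].
  - rewrite Nat.eqb_refl, lincomb_zero, vadd_0l, vscal_1; [reflexivity|].
    intros i Hi. destruct (Nat.eqb_spec i n); [lia|reflexivity].
  - rewrite IHn by lia. destruct (Nat.eqb_spec n j); [lia|]. rewrite vscal_0, vadd_0. reflexivity.
Qed.

Lemma lincomb_S_last n (c : nat -> CC) (v : nat -> X) lam :
  lincomb (S n) (fun i => if Nat.ltb i n then c i else lam) v = vadd (lincomb n c v) (vscal lam (v n)).
Proof.
  simpl. rewrite Nat.ltb_irrefl. f_equal. apply lincomb_ext. intros i Hi.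
  apply Nat.ltb_lt in Hi. rewrite Hi. reflexivity.
Qed.

Definition in_span n v (x : X) : Prop := exists c, x = lincomb n c v.

Definition far_from_span n v (x : X) (d : R) : Prop :=
  forall c, d <= vnorm (vsub x (lincomb n c v)).

(* Dividing by the last coefficient [lam] turns the combination into [lam (v n - w)]
   with [w] in the span of the first [n] vectors. *)
Lemma lincomb_last_coef_bound n v dv : far_from_span n v (v n) dv ->
  forall c lam, Cmod lam * dv <= vnorm (vadd (lincomb n c v) (vscal lam (v n))).
Proof.
  intros Hb c lam.
  destruct (classic (lam = C0)) as [->|Hnz].
  { rewrite Cmod_C0, Rmult_0_l. apply vnorm_ge0. }
  set (c' := fun i => Cmul (Copp (Cinv lam)) (c i)).
  assert (E : vadd (lincomb n c v) (vscal lam (v n)) = vscal lam (vsub (v n) (lincomb n c' v))).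
  { rewrite vscal_sub, lincomb_scal.
    rewrite (lincomb_ext n (fun i => Cmul lam (c' i)) (fun i => Copp (c i)))
      by (intros; apply Cmul_oppVr; exact Hnz).
    rewrite <- lincomb_opp. unfold vsub. rewrite vopp_opp, vadd_comm. reflexivity. }
  rewrite E, vnorm_scal. apply Rmult_le_compat_l; [apply Cmod_ge0|apply Hb].
Qed.

(* If [x] had distance [0] to the span of [v 0, ..., v n], the last coefficients of
   approximating combinations would be bounded (since [v n] is away from the smaller
   span), hence would cluster at some [lst]; then [x - lst v n] would have distance
   [0] to the smaller span, contradicting the induction hypothesis. *)
Lemma far_from_span_S n v :
  (forall x, ~ in_span n v x -> exists d, d > 0 /\ far_from_span n v x d) ->
  ~ in_span n v (v n) ->
  forall x, ~ in_span (S n) v x -> exists d, d > 0 /\ far_from_span (S n) v x d.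
Proof.
  intros IH Hv x Hx. destruct (IH (v n) Hv) as [dv [Hdv Hdvb]].
  apply NNPP; intro Hneg.
  assert (Happrox : forall k : nat, exists c, vnorm (vsub x (lincomb (S n) c v)) < / (INR k + 1)).
  { intro k. apply NNPP; intro Hn. apply Hneg. exists (/ (INR k + 1)).
    split; [apply inv_INR_S_pos|]. intro c. apply Rnot_lt_le; intro; apply Hn; exists c; auto. }
  destruct (choice _ Happrox) as [ck Hck].
  assert (Hbd : forall k, Cmod (ck k n) <= (vnorm x + 1) / dv).
  { intro k. pose proof (lincomb_last_coef_bound n v dv Hdvb (ck k) (ck k n)) as K.
    pose proof (vnorm_le_sub (lincomb (S n) (ck k) v) x) as T.
    rewrite vnorm_sub_sym in T. specialize (Hck k). simpl in T, Hck.
    assert (/ (INR k + 1) <= 1).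
    { rewrite <- Rinv_1. apply Rinv_le_contravar; [lra|]. pose proof (pos_INR k); lra. }
    apply Rmult_le_reg_r with dv; auto. unfold Rdiv. rewrite Rmult_assoc, Rinv_l by lra. lra. }
  destruct (Cseq_bounded_cvg_subseq (fun k => ck k n) _ Hbd) as [phi [lst [Hphi Hlst]]].
  set (x' := vsub x (vscal lst (v n))).
  destruct (IH x') as [d' [Hd' Hd'b]].
  { intros [c Hc]. apply Hx. exists (fun i => if Nat.ltb i n then c i else lst).
    rewrite lincomb_S_last, <- Hc. unfold x'. rewrite vadd_comm. symmetry; apply vadd_sub. }
  pose proof (vnorm_ge0 (v n)) as Hw.
  destruct (Hlst (d' / (2 * (vnorm (v n) + 1)))) as [N1 HN1]; [apply Rdiv_lt_0_compat; lra|].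
  destruct (inv_INR_S_small (d' / 2)) as [N2 HN2]; [lra|].
  set (k := max N1 N2).
  specialize (HN1 k ltac:(lia)).
  specialize (HN2 (phi k) ltac:(pose proof (subseq_index_ge phi Hphi k); lia)).
  specialize (Hck (phi k)). specialize (Hd'b (ck (phi k))).
  set (lam := ck (phi k) n) in *.
  assert (E : vsub x' (lincomb n (ck (phi k)) v) =
    vadd (vsub x (lincomb (S n) (ck (phi k)) v)) (vscal (Cadd lam (Copp lst)) (v n))).
  { simpl. fold lam. rewrite vscal_subs, <- vsub_sub, <- vsub_split.
    unfold x'. rewrite !vsub_sub, vadd_comm. reflexivity. }
  rewrite E in Hd'b. pose proof (vnorm_triangle _ (vsub x (lincomb (S n) (ck (phi k)) v))
    (vscal (Cadd lam (Copp lst)) (v n))) as T.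
  rewrite vnorm_scal in T.
  assert (Cmod (Cadd lam (Copp lst)) * vnorm (v n) < d' / 2).
  { apply Rle_lt_trans with (d' / (2 * (vnorm (v n) + 1)) * vnorm (v n)).
    - apply Rmult_le_compat_r; [exact Hw|left; exact HN1].
    - apply Rmult_lt_reg_r with (2 * (vnorm (v n) + 1)); [lra|].
      replace (d' / (2 * (vnorm (v n) + 1)) * vnorm (v n) * (2 * (vnorm (v n) + 1)))
        with (d' * vnorm (v n)) by (field; lra). nra. }
  lra.
Qed.

Lemma far_from_span_pos n v x : ~ in_span n v x -> exists d, d > 0 /\ far_from_span n v x d.
Proof.
  revert x. induction n as [|n IH]; intros x Hx.
  - exists (vnorm x). assert (Hx0 : x <> vzero) by (intro E; apply Hx; exists (fun _ => C0); exact E).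
    split; [apply vnorm_gt0, Hx0|]. intro c. simpl. rewrite vsub_0. lra.
  - destruct (classic (in_span n v (v n))) as [[c0 Hc0]|Hv].
    + destruct (IH x) as [d [Hd Hdb]].
      { intros [c Hc]. apply Hx. exists (fun i => if Nat.ltb i n then c i else C0).
        rewrite lincomb_S_last, vscal_0, vadd_0. exact Hc. }
      exists d; split; [exact Hd|]. intro c. simpl.
      rewrite Hc0, lincomb_scal, <- lincomb_add. apply Hdb.
    + exact (far_from_span_S n v IH Hv x Hx).
Qed.

End FiniteSpan.

(* Riesz's lemma: a point at distance [D] from the span is within [2 D] of some
   combination [w]; rescaling [x - w] to norm [1] gives distance at least [1/2]. *)
Lemma riesz_lemma {X : CNormedSpace} n (v : nat -> X) : infinite_dimensional X ->
  exists u, vnorm u <= 1 /\ far_from_span n v u (/ 2).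
Proof.
  intro Hinf. destruct (Hinf n v) as [x Hx].
  destruct (far_from_span_pos n v x Hx) as [d [Hd Hdb]].
  destruct (completeness (far_from_span n v x)) as [D [HD1 HD2]].
  { exists (vnorm x). intros r Hr. specialize (Hr (fun _ => C0)).
    rewrite lincomb_zero, vsub_0 in Hr; auto. }
  { exists d. exact Hdb. }
  assert (HdD : d <= D) by (apply HD1; exact Hdb).
  assert (HDl : far_from_span n v x D) by (intro c; apply HD2; intros r Hr; apply Hr).
  assert (Hc0 : exists c0, vnorm (vsub x (lincomb n c0 v)) < 2 * D).
  { apply NNPP; intro Hn. assert (H2D : far_from_span n v x (2 * D)).
    { intro c. apply Rnot_lt_le. intro; apply Hn; exists c; auto. }
    specialize (HD1 _ H2D). lra. }
  destruct Hc0 as [c0 Hc0].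
  set (t := vnorm (vsub x (lincomb n c0 v))) in *.
  assert (Ht : D <= t) by apply HDl.
  assert (Hit : 0 < / t) by (apply Rinv_0_lt_compat; lra).
  exists (vscal (mkC (/ t) 0) (vsub x (lincomb n c0 v))). split.
  { rewrite vnorm_scal, Cmod_real. fold t. rewrite Rabs_right by lra.
    right; field; lra. }
  intro c.
  set (c' := fun i => Cadd (c0 i) (Cmul (mkC t 0) (c i))).
  assert (Eq : vsub (vscal (mkC (/ t) 0) (vsub x (lincomb n c0 v))) (lincomb n c v) =
     vscal (mkC (/ t) 0) (vsub x (lincomb n c' v))).
  { unfold c'. rewrite lincomb_add, <- lincomb_scal, <- vsub_sub, (vscal_sub _ (vsub _ _)), vscal_mul.
    replace (Cmul (mkC (/ t) 0) (mkC t 0)) with C1 by (apply CC_eq; simpl; field; lra).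
    rewrite vscal_1. reflexivity. }
  rewrite Eq, vnorm_scal, Cmod_real, Rabs_right by lra.
  specialize (HDl c').
  apply Rle_trans with (/ t * D).
  - apply Rmult_le_reg_l with (2 * t); [lra|].
    replace (2 * t * (/ t * D)) with (2 * D) by (field; lra). lra.
  - apply Rmult_le_compat_l; lra.
Qed.

(* [riesz_prefix R k] lists the first [k] terms of the sequence [e k := R (riesz_prefix R k) k];
   entries from index [k] on are unused. *)
Fixpoint riesz_prefix {X : CNormedSpace} (R : (nat -> X) -> nat -> X) (k : nat) : nat -> X :=
  match k with
  | O => fun _ => vzero
  | S k' => fun i => if Nat.ltb i k' then riesz_prefix R k' i else R (riesz_prefix R k') k'
  end.

Lemma riesz_prefix_eq {X : CNormedSpace} (R : (nat -> X) -> nat -> X) k i : (i < k)%nat ->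
  riesz_prefix R k i = R (riesz_prefix R i) i.
Proof.
  induction k; intro H; [lia|]. simpl. destruct (Nat.ltb_spec i k).
  - apply IHk; auto.
  - assert (i = k) by lia. subst. reflexivity.
Qed.

Lemma separated_unit_sequence {X : CNormedSpace} : infinite_dimensional X ->
  exists e : nat -> X, (forall k, vnorm (e k) <= 1) /\
    forall j k, (j < k)%nat -> / 2 <= vnorm (vsub (e k) (e j)).
Proof.
  intro Hinf.
  destruct (choice _ (fun v => choice _ (fun n => riesz_lemma n v Hinf))) as [R HR].
  exists (fun k => R (riesz_prefix R k) k). split.
  { intro k; apply HR. }
  intros j k Hjk. destruct (HR (riesz_prefix R k) k) as [_ H].
  specialize (H (fun i => if Nat.eqb i j then C1 else C0)).
  rewrite lincomb_delta, riesz_prefix_eq in H by exact Hjk. exact H.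
Qed.

Lemma cvg_subseq_not_separated {X : CNormedSpace} (p : nat -> X) idx l delta :
  subseq_index idx -> cvg_to (fun k => p (idx k)) l -> delta > 0 ->
  exists j k, (j < k)%nat /\ vnorm (vsub (p k) (p j)) < delta.
Proof.
  intros Hidx Hl Hd. destruct (Hl (delta / 2)) as [N HN]; [lra|].
  exists (idx N), (idx (S N)). split; [apply Hidx|].
  pose proof (HN N (Nat.le_refl N)) as H1. pose proof (HN (S N) (Nat.le_succ_diag_r N)) as H2.
  rewrite vnorm_sub_sym in H1. pose proof (vnorm_sub_triangle (p (idx (S N))) l (p (idx N))). lra.
Qed.

Section ScaledValues.
Context {X : CNormedSpace} (f : CC -> X).
Hypothesis Hf : vcontinuous f.
Hypothesis Hnz : forall z, f z <> vzero.

Lemma bounded_scaled_values_cluster r M (al zk : nat -> CC) :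
  (forall k, Cmod (zk k) <= r) -> (forall k, vnorm (vscal (al k) (f (zk k))) <= M) ->
  exists idx l, subseq_index idx /\ cvg_to (fun k => vscal (al (idx k)) (f (zk (idx k)))) l.
Proof.
  intros Hzk HM.
  destruct (Cseq_bounded_cvg_subseq zk r Hzk) as [phi [zs [Hphi Hzs]]].
  set (s := f zs).
  assert (Hs : 0 < vnorm s) by exact (vnorm_gt0 s (Hnz zs)).
  pose proof (vcontinuous_cvg f _ zs Hf Hzs) as Hfs. fold s in Hfs.
  destruct (Hfs (vnorm s / 2)) as [N0 HN0]; [lra|].
  assert (Hbd : forall k, Cmod (al (phi (N0 + k)%nat)) <= 2 * M / vnorm s).
  { intro k. set (w := f (zk (phi (N0 + k)%nat))).
    specialize (HN0 (N0 + k)%nat ltac:(lia)). fold w in HN0.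
    pose proof (vnorm_le_sub s w) as T. rewrite vnorm_sub_sym in T.
    specialize (HM (phi (N0 + k)%nat)). fold w in HM. rewrite vnorm_scal in HM.
    pose proof (Cmod_ge0 (al (phi (N0 + k)%nat))).
    apply Rmult_le_reg_r with (vnorm s / 2); [lra|].
    replace (2 * M / vnorm s * (vnorm s / 2)) with M by (field; lra).
    apply Rle_trans with (2 := HM). apply Rmult_le_compat_l; [assumption|]. lra. }
  destruct (Cseq_bounded_cvg_subseq _ _ Hbd) as [psi [als [Hpsi Hals]]].
  pose proof (subseq_index_shift N0 psi Hpsi) as Hshift.
  exists (fun k => phi (N0 + psi k)%nat), (vscal als s). split.
  - exact (subseq_index_comp phi _ Hphi Hshift).
  - apply cvg_scal; [exact Hals|].
    exact (cvg_subseq (fun k => f (zk (phi k))) s _ Hshift Hfs).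
Qed.

Lemma dense_scaled_values_outside_disk :
  infinite_dimensional X -> dense (fun y => exists alpha z, y = vscal alpha (f z)) ->
  forall omega0, dense (fun y => exists alpha z, Cmod z > Cmod omega0 /\ y = vscal alpha (f z)).
Proof.
  intros Hinf Hd omega0 y eps Heps. apply NNPP; intro Hno.
  destruct (separated_unit_sequence Hinf) as [e [He1 He2]].
  set (u := fun k => vadd y (vscal (mkC (eps / 2) 0) (e k))).
  assert (Hu : forall k, vnorm (vsub (u k) y) <= eps / 2).
  { intro k. unfold u. rewrite vsub_add_self, vnorm_scal, Cmod_real, Rabs_right by lra.
    specialize (He1 k). nra. }
  assert (Happrox : forall k, exists p : CC * CC, Cmod (snd p) <= Cmod omega0 /\
      vnorm (vsub (vscal (fst p) (f (snd p))) (u k)) < eps / 16).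
  { intro k. destruct (Hd (u k) (eps / 16)) as [a [[al [z ->]] Ha]]; [lra|].
    exists (al, z). split; [|exact Ha].
    apply Rnot_lt_le. intro Hz. apply Hno. exists (vscal al (f z)). split.
    { exists al, z. split; auto. }
    pose proof (vnorm_sub_triangle (vscal al (f z)) (u k) y). specialize (Hu k). lra. }
  destruct (choice _ Happrox) as [pk Hpk].
  set (P := fun k => vscal (fst (pk k)) (f (snd (pk k)))).
  assert (Hsep : forall j k, (j < k)%nat -> eps / 8 <= vnorm (vsub (P k) (P j))).
  { intros j k Hjk.
    assert (Huk : vnorm (vsub (u k) (u j)) = eps / 2 * vnorm (vsub (e k) (e j))).
    { unfold u. rewrite vsub_add_l, <- vscal_sub, vnorm_scal, Cmod_real, Rabs_right by lra.
      reflexivity. }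
    specialize (He2 j k Hjk).
    pose proof (vnorm_sub_triangle (u k) (P k) (u j)).
    pose proof (vnorm_sub_triangle (P k) (P j) (u j)).
    pose proof (proj2 (Hpk k)) as Pk. pose proof (proj2 (Hpk j)) as Pj.
    fold (P k) in Pk. fold (P j) in Pj. rewrite vnorm_sub_sym in Pk. nra. }
  assert (Hbd : forall k, vnorm (P k) <= vnorm y + eps).
  { intro k. pose proof (vnorm_le_sub (P k) y). pose proof (vnorm_sub_triangle (P k) (u k) y).
    pose proof (proj2 (Hpk k)) as Pk. fold (P k) in Pk. specialize (Hu k). lra. }
  destruct (bounded_scaled_values_cluster _ _ (fun k => fst (pk k)) (fun k => snd (pk k))
              (fun k => proj1 (Hpk k)) Hbd) as [idx [l [Hidx Hl]]].
  destruct (cvg_subseq_not_separated P idx l (eps / 8) Hidx Hl) as [j [k [Hjk Hjk']]]; [lra|].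
  specialize (Hsep j k Hjk). lra.
Qed.

End ScaledValues.

Theorem theorem4p3 (X : CNormedSpace) (Cop : X -> X) (S : CC -> X -> X) (x : X) :
  complete X ->
  infinite_dimensional X ->
  entire_C_regularized_group Cop S ->
  dense_range Cop ->
  supercyclic S x ->
  (forall z : CC, S z x <> vzero) /\
  (forall omega0 : CC,
     dense (fun y => exists alpha z, Cmod z > Cmod omega0 /\ y = vscal alpha (S z x))).
Proof.
  intros _ Hinf [HCb [HSb [HS0 [HSadd Hent]]]] Hdr Hsc.
  assert (Hnz : forall z, S z x <> vzero).
  { exact (supercyclic_orbit_nonvanishing Cop S HS0 HSadd HSb x HCb Hdr
             (infinite_dimensional_nontrivial X Hinf) Hsc). }
  split; [exact Hnz|].
  exact (dense_scaled_values_outside_disk (fun z => S z x)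
           (entire_continuous _ (Hent x)) Hnz Hinf Hsc).
Qed.
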